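(* Let $k\ge 1$, $0\le r<k$ and $n\ge 1$ be integers, and let $$B_n(k,r,x)=\left(\binom{i-k+1+r}{i-j}x^k+\binom{i+1+r}{i-j+1}\right)_{i,j=0}^{n-1}.$$ Then $x^r\det B_n(k,r,x)=F^{(k)}_{kn+r}(x)$.
   Context: Binomial coefficients are the generalized ones: for an integer $m$ (possibly negative) and an integer $j$, $\binom{m}{j}=\frac{m(m-1)\cdots(m-j+1)}{j!}$ if $j\ge 0$ and $\binom{m}{j}=0$ if $j<0$. For an integer $k\ge1$, the generalized Fibonacci polynomials $F^{(k)}_n(x)\in\mathbb{Z}[x]$ ($n\ge0$) are defined by $F^{(k)}_n(x)=x^n$ for $0\le n<k$ and $F^{(k)}_n(x)=xF^{(k)}_{n-1}(x)+F^{(k)}_{n-k}(x)$ for $n\ge k$. *)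

From HB Require Import structures.
From mathcomp Require Import all_boot all_order all_algebra.
Set Implicit Arguments. Unset Strict Implicit. Unset Printing Implicit Defensive.
Import Order.TTheory GRing.Theory Num.Theory.
Local Open Scope ring_scope.

(* Generalized binomial coefficient binom(m, j) for integers m (possibly
   negative) and j: m(m-1)...(m-j+1)/j! if j >= 0 and 0 if j < 0.
   The division is exact (in int). *)
Definition gbin (m j : int) : int :=
  match j with
  | Posz j' => ((\prod_(l < j') (m - (nat_of_ord l)%:Z)) %/ (j'`!)%:Z)%Z
  | Negz _ => 0
  end.

(* Generalized Fibonacci polynomials F^{(k)}_n(x) in Z[x]:
   F_n = x^n for 0 <= n < k, F_n = x F_{n-1} + F_{n-k} for n >= k.
   Implemented with fuel; fuel n.+1 suffices when k >= 1. *)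
Fixpoint Fib_aux (k fuel n : nat) : {poly int} :=
  match fuel with
  | 0%N => 0
  | f.+1 => if (n < k)%N then 'X^n
            else 'X * Fib_aux k f n.-1 + Fib_aux k f (n - k)
  end.

Definition Fib (k n : nat) : {poly int} := Fib_aux k n.+1 n.

Definition Bmat (k r n : nat) : 'M[{poly int}]_n :=
  \matrix_(i < n, j < n)
    ((gbin (i%:Z - k%:Z + 1 + r%:Z) (i%:Z - j%:Z))%:P * 'X^k
     + (gbin (i%:Z + 1 + r%:Z) (i%:Z - j%:Z + 1))%:P).

From HB Require Import structures.
From mathcomp Require Import all_boot all_order all_algebra.
From mathcomp Require Import zify ring.
Set Implicit Arguments.
Unset Strict Implicit.
Unset Printing Implicit Defensive.
Import GRing.Theory.
Local Open Scope ring_scope.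

(* B_n is lower Hessenberg with ones on the superdiagonal, so expanding along
   the last column expresses det B_(n+1) through the leading minors det B_j,
   j <= n.  The closed form D_n = sum_l (-1)^(n+l) x^(kl) binom(-(r+1+kl), n-l)
   obeys the same recurrence: after exchanging the two sums, Vandermonde's
   convolution evaluates every inner sum and the outer sum telescopes in l.
   Rewritten as D_n = sum_l x^(kl) binom(r+kl+n-l, n-l) and multiplied by x^r,
   this is the expansion F^(k)_m = sum_l binom(m-(k-1)l, l) x^(m-kl) at
   m = kn + r, summed in the reverse order. *)

Lemma gbin_neg (m j : int) : j < 0 -> gbin m j = 0.
Proof. by case: j. Qed.

Lemma gbin_by_ratio (m : int) (c : nat -> int) :
  c 0%N = 1 -> (forall j, c j.+1 * j.+1%:Z = c j * (m - j%:Z)) ->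
  forall j : nat, gbin m j = c j.
Proof.
move=> c0 cS j; rewrite /gbin; suff -> : \prod_(l < j) (m - l%:Z) = c j * j`!%:Z.
  by rewrite mulzK // eqz_nat -lt0n fact_gt0.
elim: j => [|j IHj]; first by rewrite big_ord0 c0.
rewrite big_ord_recr /= IHj factS PoszM.
by transitivity (c j.+1 * j.+1%:Z * j`!%:Z); [rewrite cS|]; ring.
Qed.

Lemma gbin_posz (a j : nat) : gbin a j = 'C(a, j).
Proof.
apply: (@gbin_by_ratio _ (fun j => 'C(a, j)%:Z)) => [|{}j] /=; first by rewrite bin0.
have [lt_aj|le_ja] := ltnP a j; first by rewrite !bin_small ?mul0r // ltnW.
by rewrite -PoszM mulnC mul_bin_left PoszM mulrC subzn.
Qed.

Lemma gbin_negz (b j : nat) : gbin (Negz b) j = (-1) ^+ j * 'C(b + j, j)%:Z.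
Proof.
apply: (@gbin_by_ratio _ (fun j => (-1) ^+ j * 'C(b + j, j)%:Z)) => [|{}j] /=.
  by rewrite addn0 bin0.
have binS_j : ('C(b + j.+1, j.+1) * j.+1 = 'C(b + j, j) * (b + j).+1)%N.
  by rewrite addnS mulnC -mul_bin_diag mulnC.
transitivity (- (-1) ^+ j * ('C(b + j.+1, j.+1) * j.+1)%N%:Z).
  by rewrite PoszM exprS; ring.
by rewrite binS_j PoszM NegzE -addn1 !PoszD; ring.
Qed.

Lemma gbin0 (m : int) : gbin m 0 = 1.
Proof. by case: m => [a|b]; rewrite ?gbin_posz ?gbin_negz ?bin0 ?binn. Qed.

Lemma gbin0l (p : int) : gbin 0 p = (p == 0)%:Z.
Proof. by case: p => [j|j] //; rewrite gbin_posz bin0n. Qed.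

Lemma gbin_pascal (m p : int) : gbin (m + 1) p = gbin m p + gbin m (p - 1).
Proof.
case: p => [[|j]|j]; last by rewrite !gbin_neg // NegzE; lia.
  by rewrite !gbin0 (@gbin_neg _ (0 - 1)) ?addr0.
have -> : Posz j.+1 - 1 = j by lia.
case: m => [a|[|b]].
- by rewrite -PoszD addn1 !gbin_posz binS PoszD.
- by rewrite !gbin_negz gbin_posz add0n bin_small // !binn exprS; ring.
- have -> : Negz b.+1 + 1 = Negz b by rewrite !NegzE; lia.
  by rewrite !gbin_negz exprS !addSn !addnS (binS (b + j).+1) PoszD; ring.
Qed.

Section Vandermonde.
Variables (d : int) (l N : nat).

Let conv (c T : int) := \sum_(j < N) gbin c (T - j%:Z) * gbin d (j%:Z - l%:Z).

Let conv_neg c T : T < 0 -> conv c T = gbin (c + d) (T - l%:Z).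
Proof.
move=> T_lt0; rewrite gbin_neg; last by lia.
by rewrite /conv big1 // => j _; rewrite gbin_neg ?mul0r //; lia.
Qed.

Let conv_pascal c T : conv (c + 1) T = conv c T + conv c (T - 1).
Proof.
rewrite /conv -big_split; apply: eq_bigr => j _ /=.
by rewrite gbin_pascal mulrDl addrAC.
Qed.

Lemma gbin_vandermonde (c T : int) : T < N%:Z ->
  \sum_(j < N) gbin c (T - j%:Z) * gbin d (j%:Z - l%:Z) = gbin (c + d) (T - l%:Z).
Proof.
rewrite -/(conv c T); elim/int_rect: c T => [|c IHc|c IHc] T.
- case: T => [t|t] t_lt_N; last exact: conv_neg.
  have t_lt_N' : (t < N)%N by lia.
  rewrite /conv (bigD1 (Ordinal t_lt_N')) //= gbin0l subrr eqxx mul1r add0r.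
  rewrite big1 ?addr0 // => j; rewrite -val_eqE /= => j_neq_t.
  by rewrite gbin0l (_ : (_ == _) = false) ?mul0r //; lia.
- move=> T_lt_N; have T1_lt_N : T - 1 < N%:Z by lia.
  rewrite -addn1 PoszD conv_pascal !IHc //.
  by rewrite (addrAC _ 1) gbin_pascal; congr (_ + gbin _ _); ring.
- (* Pascal's rule determines conv c' T from conv (c' + 1) T and
     conv c' (T - 1), so induct on T. *)
  move: IHc; rewrite (_ : - c%:Z = - c.+1%:Z + 1); last by lia.
  set c' := - c.+1%:Z => IHc.
  have step (t : int) : conv c' (t - 1) = gbin (c' + d) (t - 1 - l%:Z) ->
      t < N%:Z -> conv c' t = gbin (c' + d) (t - l%:Z).
    move=> prev t_lt_N; apply: (addIr (conv c' (t - 1))).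
    rewrite -conv_pascal IHc // prev (addrAC _ 1) gbin_pascal.
    by congr (_ + gbin _ _); ring.
  case: T => [t|t]; last by move=> _; apply: conv_neg.
  elim: t => [|t IHt] t_lt_N; apply: step => //; first by apply: conv_neg.
  by rewrite (_ : t.+1%:Z - 1 = t) ?IHt //; lia.
Qed.
End Vandermonde.

Lemma signr_addnn {R : pzRingType} (m : nat) : (-1) ^+ (m + m) = 1 :> R.
Proof. by rewrite -signr_odd addnn odd_double. Qed.

Lemma signr_addn_subn {R : pzRingType} (n j : nat) :
  (j <= n)%N -> (-1) ^+ (n + j) = (-1) ^+ (n - j) :> R.
Proof. by move=> le_j_n; rewrite -signr_odd -[RHS]signr_odd oddD oddB. Qed.

Lemma signr_addn_cancel {R : pzRingType} (a j l : nat) :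
  (-1) ^+ (a + j) * (-1) ^+ (j + l) = (-1) ^+ (a + l) :> R.
Proof.
rewrite -exprD -[LHS]signr_odd -[RHS]signr_odd !oddD.
by case: (odd a); case: (odd j); case: (odd l).
Qed.

Section HessenbergDeterminant.
Variables (R : comNzRingType) (a : nat -> nat -> R).
Hypothesis a_upper : forall i j, (i.+1 < j)%N -> a i j = 0.
Hypothesis a_superdiag : forall i, a i i.+1 = 1.

Definition hessmx n : 'M[R]_n := \matrix_(i, j) a i j.

(* The last-column cofactors of hessmx n.+1 have this shape. *)
Let lastrow_mx n (b : nat -> R) : 'M[R]_n.+1 :=
  \matrix_(i, j) if i == n :> nat then b j else a i j.

Let det_lastrow_mx n b :
  \det (lastrow_mx n b) = \sum_(j < n.+1) (-1) ^+ (n - j) * b j * \det (hessmx j).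
Proof.
elim: n b => [|n IHn] b.
  by rewrite (expand_det_col _ ord0) !big_ord1 /cofactor !det_mx00 !mxE /= !mulr1 mul1r.
rewrite (expand_det_col _ ord_max) big_ord_recr big_ord_recr /= big1 ?add0r.
- rewrite !mxE /= eqxx ifN ?a_superdiag ?mul1r /cofactor; last by lia.
  have -> : row' ord_max (col' ord_max (lastrow_mx n.+1 b)) = hessmx n.+1.
    by apply/matrixP => i j; rewrite !mxE !lift_max ifN // neq_ltn ltn_ord.
  have -> : row' (widen_ord (leqnSn n.+1) ord_max) (col' ord_max (lastrow_mx n.+1 b))
      = lastrow_mx n b.
    apply/matrixP => i j; rewrite !mxE lift_max /= /bump.
    have [i_lt_n|n_le_i] := ltnP i n.
      by rewrite add0n !ifN // neq_ltn ?i_lt_n // ltnS ltnW.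
    have i_eq_n : i == n :> nat by rewrite eqn_leq n_le_i -ltnS ltn_ord.
    by rewrite add1n eqSS i_eq_n.
  rewrite IHn [RHS]big_ord_recr /= subnn expr0 mul1r addnS exprS !signr_addnn.
  rewrite mulr1 mulN1r mul1r -sumrN; congr (_ + _); apply: eq_bigr => j _.
  by rewrite subSn 1?exprS ?mulN1r ?mulNr // -ltnS.
- move=> i _; have lt_in := ltn_ord i.
  by rewrite !mxE /= ifN ?a_upper ?mul0r //; lia.
Qed.

Lemma det_hessmxS n :
  \det (hessmx n.+1) = \sum_(j < n.+1) (-1) ^+ (n - j) * a n j * \det (hessmx j).
Proof.
rewrite -det_lastrow_mx; congr (\det _); apply/matrixP => i j; rewrite !mxE.
by case: eqP => // ->.
Qed.
End HessenbergDeterminant.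

Section FibonacciSum.
Variable k : nat.

Definition fib_term (m l : nat) : {poly int} := 'C(m - (k - 1) * l, l)%:R * 'X^(m - k * l).

Lemma fib_term_small m l : (m < k * l)%N -> fib_term m l = 0.
Proof. by move=> lt_m_kl; rewrite /fib_term bin_small ?mul0r //; nia. Qed.

Lemma fib_term0 m : fib_term m 0 = 'X^m.
Proof. by rewrite /fib_term !muln0 !subn0 bin0 mul1r. Qed.

Lemma fib_term_sum_eq m N1 N2 : (m < k * N1)%N -> (m < k * N2)%N ->
  \sum_(l < N1) fib_term m l = \sum_(l < N2) fib_term m l.
Proof.
wlog le_N12 : N1 N2 / (N1 <= N2)%N => [hwlog|lt_m_kN1 _].
  by case/orP: (leq_total N1 N2) => le_N; [|symmetry]; apply: hwlog.
rewrite (big_ord_widen _ _ le_N12) big_mkcond /=.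
apply: eq_bigr => l _; case: ifP => // /negbT; rewrite -leqNgt => le_N1_l.
by rewrite fib_term_small //; apply: (leq_trans lt_m_kN1); rewrite leq_mul2l le_N1_l orbT.
Qed.

Hypothesis k_gt0 : (0 < k)%N.

Lemma fib_termS m l : (k <= m)%N ->
  fib_term m l.+1 = 'X * fib_term m.-1 l.+1 + fib_term (m - k) l.
Proof.
move=> le_k_m; have [lt_m|le_m] := ltnP m (k * l.+1).
  by rewrite !fib_term_small ?mulr0 ?add0r //; nia.
have [A eA] : exists A, (m - (k - 1) * l.+1 = A.+1)%N.
  by exists (m - (k - 1) * l.+1).-1; nia.
have shiftX : 'X * ('C(A, l.+1)%:R * 'X^(m.-1 - k * l.+1))
    = 'C(A, l.+1)%:R * 'X^(m - k * l.+1) :> {poly int}.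
  have [eq_m|neq_m] := eqVneq m (k * l.+1).
    by rewrite bin_small ?mul0r ?mulr0 //; nia.
  by rewrite mulrCA -exprS; congr (_ * 'X^_); nia.
rewrite /fib_term eA binS natrD mulrDl -shiftX.
have -> : (m.-1 - (k - 1) * l.+1 = A)%N by nia.
have -> : (m - k - (k - 1) * l = A)%N by nia.
by have -> : (m - k - k * l = m - k * l.+1)%N by nia.
Qed.

Lemma Fib_aux_fuel f1 f2 n : (n < f1)%N -> (n < f2)%N -> Fib_aux k f1 n = Fib_aux k f2 n.
Proof.
elim: f1 f2 n => [|f1 IHf] [|f2] n //= lt_n_f1 lt_n_f2.
by case: ifP => // /negbT; rewrite -leqNgt => le_k_n; congr (_ * _ + _); apply: IHf; lia.
Qed.

Lemma FibE n :
  Fib k n = if (n < k)%N then 'X^n else 'X * Fib k n.-1 + Fib k (n - k).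
Proof.
rewrite /Fib [in LHS]/=; case: ifP => // /negbT; rewrite -leqNgt => le_k_n.
by congr (_ * _ + _); apply: Fib_aux_fuel; lia.
Qed.

Lemma Fib_sum m N : (m < k * N)%N -> Fib k m = \sum_(l < N) fib_term m l.
Proof.
elim/ltn_ind: m N => m IHm N lt_m_kN; rewrite FibE.
have [lt_m_k|le_k_m] := ltnP m k.
  by rewrite (@fib_term_sum_eq m N 1) ?big_ord1 ?fib_term0 //; nia.
rewrite (@fib_term_sum_eq m N m.+1) // ?big_ord_recl ?fib_term0; last by nia.
rewrite (IHm m.-1 _ m.+1) ?big_ord_recl ?fib_term0; [|lia|nia].
rewrite (IHm (m - k)%N _ m); [|lia|nia].
rewrite mulrDr -exprS prednK; last by lia.
rewrite mulr_sumr -addrA -big_split /=; congr (_ + _).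
by apply: eq_bigr => l _; rewrite /bump add1n (fib_termS l le_k_m).
Qed.

Lemma Fib_binomial r n : (r < k)%N ->
  Fib k (k * n + r) = \sum_(l < n.+1) 'X^(r + k * l) * 'C(r + k * l + (n - l), n - l)%:R.
Proof.
move=> lt_r_k; rewrite (@Fib_sum _ n.+1); last by nia.
rewrite -(big_mkord xpredT (fib_term (k * n + r))) big_rev_mkord subn0.
apply: eq_bigr => l _; have le_l_n : (l <= n)%N := ltn_ord l.
rewrite /fib_term subSS mulrC.
have -> : (k * n + r - (k - 1) * (n - l) = r + k * l + (n - l))%N by nia.
by have -> : (k * n + r - k * (n - l) = r + k * l)%N by nia.
Qed.

End FibonacciSum.

Section DeterminantOfB.
Variables k r : nat.

Definition bentry (i j : nat) : {poly int} :=
  (gbin (i%:Z - k%:Z + 1 + r%:Z) (i%:Z - j%:Z))%:P * 'X^k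
  + (gbin (i%:Z + 1 + r%:Z) (i%:Z - j%:Z + 1))%:P.

Lemma bentry_upper i j : (i.+1 < j)%N -> bentry i j = 0.
Proof. by move=> lt_i1_j; rewrite /bentry !gbin_neg ?mul0r ?add0r //; lia. Qed.

Lemma bentry_superdiag i : bentry i i.+1 = 1.
Proof.
rewrite /bentry gbin_neg ?mul0r ?add0r; last by lia.
by rewrite (_ : _ - _ + 1 = 0) ?gbin0 //; lia.
Qed.

Definition minor_term (j l : nat) : {poly int} :=
  (-1) ^+ (j + l) * 'X^(k * l) * (gbin (Negz (r + k * l)) (j%:Z - l%:Z))%:P.

Definition minorB (j : nat) : {poly int} := \sum_(l < j.+1) minor_term j l.

Lemma minorB_widen j N : (j < N)%N -> minorB j = \sum_(l < N) minor_term j l.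
Proof.
move=> lt_j_N; rewrite /minorB (big_ord_widen _ _ lt_j_N) big_mkcond /=.
apply: eq_bigr => l _; case: ifP => // /negbT; rewrite -leqNgt => lt_j_l.
by rewrite /minor_term gbin_neg ?mulr0 //; lia.
Qed.

Lemma sum_bentry_gbin n l N : (n.+1 < N)%N ->
  \sum_(j < N) bentry n j * (gbin (Negz (r + k * l)) (j%:Z - l%:Z))%:P
  = 'X^k * (gbin (n%:Z - (k * l.+1)%:Z) (n%:Z - l%:Z))%:P
    + (gbin (n%:Z - (k * l)%:Z) (n.+1%:Z - l%:Z))%:P.
Proof.
move=> lt_n1_N; set d := Negz (r + k * l).
have entry_split (j : nat) : bentry n j * (gbin d (j%:Z - l%:Z))%:P =
    'X^k * (gbin (n%:Z - k%:Z + 1 + r%:Z) (n%:Z - j%:Z) * gbin d (j%:Z - l%:Z))%:P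
    + (gbin (n%:Z + 1 + r%:Z) (n.+1%:Z - j%:Z) * gbin d (j%:Z - l%:Z))%:P.
  by rewrite /bentry !polyCM (_ : n.+1%:Z - j%:Z = n%:Z - j%:Z + 1); [ring|lia].
under eq_bigr do rewrite entry_split.
rewrite big_split /= -mulr_sumr -!rmorph_sum /= !gbin_vandermonde; [|lia|lia].
by congr ('X^k * (gbin _ _)%:P + (gbin _ _)%:P); rewrite /d NegzE ?mulnS; lia.
Qed.

Definition telescope_term (n l : nat) : {poly int} :=
  (-1) ^+ (n + l) * 'X^(k * l) * (gbin (n%:Z - (k * l)%:Z) (n.+1%:Z - l%:Z))%:P.

Lemma sum_bentry_minor_term n l N : (n.+1 < N)%N ->
  \sum_(j < N) (-1) ^+ (n.+1 + j) * bentry n j * minor_term j l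
  = telescope_term n l.+1 - telescope_term n l.
Proof.
move=> lt_n1_N.
transitivity ((-1) ^+ (n.+1 + l) * 'X^(k * l) *
    \sum_(j < N) bentry n j * (gbin (Negz (r + k * l)) (j%:Z - l%:Z))%:P : {poly int}).
  rewrite mulr_sumr; apply: eq_bigr => j _.
  by rewrite /minor_term -(signr_addn_cancel n.+1 j l) mulrACA !mulrA.
rewrite sum_bentry_gbin // /telescope_term (_ : n.+1%:Z - l.+1%:Z = n%:Z - l%:Z); last by lia.
by rewrite mulnS (exprD 'X) addnS exprS; ring.
Qed.

Lemma minorB_rec n : minorB n.+1 = \sum_(j < n.+1) (-1) ^+ (n - j) * bentry n j * minorB j.
Proof.
have vanishing_sum : \sum_(j < n.+2) (-1) ^+ (n.+1 + j) * bentry n j * minorB j = 0.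
  under eq_bigr => j _ do rewrite (minorB_widen (ltn_ord j)) mulr_sumr.
  pose dtel l := telescope_term n l.+1 - telescope_term n l.
  rewrite exchange_big (eq_bigr (fun l : 'I_n.+2 => dtel l));
    last by move=> l _; rewrite sum_bentry_minor_term.
  rewrite -(big_mkord xpredT dtel) telescope_sumr //.
  rewrite /telescope_term gbin_neg ?mulr0; last by lia.
  by rewrite muln0 subr0 [_ - 0]subr0 gbin_posz bin_small ?mulr0 ?subrr.
move: vanishing_sum; rewrite big_ord_recr /= bentry_superdiag mulr1 signr_addnn mul1r.
move/eqP; rewrite addrC addr_eq0 => /eqP ->; rewrite -sumrN; apply: eq_bigr => j _.
by rewrite addSn exprS (@signr_addn_subn _ n j (ltn_ord j)) !mulNr mul1r opprK.
Qed.

Lemma det_Bmat n : \det (Bmat k r n) = minorB n.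
Proof.
rewrite -[Bmat k r n]/(hessmx bentry n); elim/ltn_ind: n => -[_|n IHn].
  by rewrite det_mx00 /minorB big_ord1 /minor_term subrr gbin0 addn0 muln0 !expr0 !mulr1.
rewrite (det_hessmxS bentry_upper bentry_superdiag) minorB_rec.
by apply: eq_bigr => j _; rewrite IHn.
Qed.

Lemma minorB_binomial n :
  minorB n = \sum_(l < n.+1) 'X^(k * l) * 'C(r + k * l + (n - l), n - l)%:R.
Proof.
apply: eq_bigr => l _; have le_l_n : (l <= n)%N := ltn_ord l.
rewrite /minor_term (_ : n%:Z - l%:Z = (n - l)%N) ?gbin_negz; last by lia.
rewrite polyCM rmorph_sign -natz polyC_natr signr_addn_subn //.
by rewrite mulrCA !mulrA -exprD signr_addnn mul1r.
Qed.
End DeterminantOfB.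

Theorem theorem2 (k r n : nat) (hk : (1 <= k)%N) (hr : (r < k)%N) (hn : (1 <= n)%N) :
  'X^r * \det (Bmat k r n) = Fib k (k * n + r).
Proof.
rewrite det_Bmat minorB_binomial (Fib_binomial hk n hr) mulr_sumr.
by apply: eq_bigr => l _; rewrite exprD mulrA.
Qed.
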